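(* Let $\Omega\colon\mathbb{R}\to\mathbb{R}_+$ be a continual diagram and let $a<a_0<b_0<b$ be real numbers such that the restriction of $\Omega$ to $[a,b]$ is $(1-\delta)$-Lipschitz for some constant $\delta>0$ and the restriction of $\mu_\Omega$ to $[a,b]$ is absolutely continuous with a density bounded from above by some constant. For $z_0\in\mathbb{R}$ and $\epsilon>0$ let $z_+^{\max}=z_+^{\max}(z_0,\epsilon)$ denote the maximal solution $z$ of the equation \[\Omega(z-\epsilon)-\Omega(z_0-\epsilon)=z-z_0-2\epsilon.\] Then there exists a constant $\epsilon_0>0$ such that for each $z_0\in[a_0,b_0]$ and each $\epsilon\in(0,\epsilon_0)$, \[z_+^{\max}-z_0\le\frac{2\epsilon}{\delta}.\]
   Context: A continual diagram is a function $\omega\colon\mathbb{R}\to\mathbb{R}_+$ such that $|\omega(z_1)-\omega(z_2)|\le|z_1-z_2|$ for all $z_1,z_2$, and $\omega(z)=|z|$ for all sufficiently large $|z|$. Its transition measure $\mu_\omega$ is the probability measure whose Cauchy transform $\mathbf{G}_\omega(z)=\int\frac{d\mu_\omega(x)}{z-x}$ satisfies $\log[z\,\mathbf{G}_\omega(z)]=-\int_{-\infty}^\infty\frac{1}{z-w}\big(\frac{\omega(w)-|w|}{2}\big)'\,dw$ for $z\in\mathbb{C}\setminus\mathbb{R}$. *)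

From mathcomp Require Import all_boot all_order all_algebra.
From mathcomp Require Import all_classical all_reals all_analysis.
From mathcomp Require Import complex.
Import Order.TTheory GRing.Theory Num.Theory.

Set Implicit Arguments.
Unset Strict Implicit.
Unset Printing Implicit Defensive.

Local Open Scope classical_set_scope.
Local Open Scope ring_scope.
Local Open Scope complex_scope.

Section Defs.
Variable R : realType.

Definition continual_diagram (w : R -> R) : Prop :=
  (forall z, 0 <= w z) /\
  (forall z1 z2, `|w z1 - w z2| <= `|z1 - z2|) /\
  (exists M : R, forall z, M <= `|z| -> w z = `|z|).

Definition cintegral (d : measure_display) (T : measurableType d)
  (mu : {measure set T -> \bar R}) (D : set T) (f : T -> R[i]) : R[i] :=
  Complex (Rintegral mu D (fun x => complex.Re (f x)))
          (Rintegral mu D (fun x => complex.Im (f x))).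

Definition cexp (z : R[i]) : R[i] :=
  Complex (expR (complex.Re z) * cos (complex.Im z))
          (expR (complex.Re z) * sin (complex.Im z)).

Definition cauchy_transform (mu : probability R R) (z : R[i]) : R[i] :=
  cintegral mu setT (fun x : R => (z - x%:C)^-1).

(* The exponent  - int 1/(z-w) ((w(w)-|w|)/2)' dw  (Lebesgue integral, the
   derivative existing a.e. since w is Lipschitz). *)
Definition transition_exponent (w : R -> R) (z : R[i]) : R[i] :=
  - cintegral (@lebesgue_measure R) setT
      (fun u : R => (z - u%:C)^-1 *
                    (derive1 (fun v : R => (w v - `|v|) / 2) u)%:C).

(* mu is the transition measure of w:  log[z G(z)] = exponent, for all
   non-real z; stated in exponentiated form z G(z) = exp(exponent). *)
Definition is_transition_measure (w : R -> R) (mu : probability R R) : Prop :=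
  forall z : R[i], complex.Im z != 0 ->
    z * cauchy_transform mu z = cexp (transition_exponent w z).

Definition bounded_density_on (mu : probability R R) (a b : R) : Prop :=
  exists (f : R -> R) (C : R),
    measurable_fun `[a, b] f /\
    (forall x, a <= x <= b -> 0 <= f x <= C) /\
    (forall A : set R, measurable A -> A `<=` `[a, b] ->
       mu A = (\int[@lebesgue_measure R]_(x in A) (f x)%:E)%E).

Definition zplus_solution (W : R -> R) (z0 eps z : R) : Prop :=
  W (z - eps) - W (z0 - eps) = z - z0 - 2 * eps.

Definition is_zplus_max (W : R -> R) (z0 eps z : R) : Prop :=
  zplus_solution W z0 eps z /\
  (forall z', zplus_solution W z0 eps z' -> z' <= z).

End Defs.

From mathcomp Require Import all_boot all_order all_algebra.
From mathcomp Require Import all_classical all_reals all_analysis.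
From mathcomp Require Import complex.
From mathcomp Require Import lra.
Import Order.TTheory GRing.Theory Num.Theory.

Set Implicit Arguments.
Unset Strict Implicit.
Unset Printing Implicit Defensive.

Local Open Scope ring_scope.

(* Writing u = z - eps and v = z0 - eps, a solution satisfies
   W u - W v = (u - v) - 2 eps, whereas W u - W v <= (u - v) - delta (min(u, b) - v)
   because the slope is at most 1 everywhere and at most 1 - delta on [a, b].
   Hence delta (min(u, b) - v) <= 2 eps, which forces u <= b as soon as
   2 eps < delta (b - v). *)

Section LipschitzIncrement.
Variables (R : realType) (W : R -> R) (a b delta : R).
Hypothesis W_lip1 : forall x y, `|W x - W y| <= `|x - y|.
Hypothesis W_lip_ab : forall x y, a <= x <= b -> a <= y <= b ->
  `|W x - W y| <= (1 - delta) * `|x - y|.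

Lemma increment_le_of_lipschitz u v : a <= v <= b -> v <= u ->
  W u - W v <= (u - v) - delta * (Order.min u b - v).
Proof.
move=> /andP[av vb] vu; have [ub|bu] := lerP u b.
  have Wuv : `|W u - W v| <= (1 - delta) * (u - v).
    by rewrite -[u - v]ger0_norm ?subr_ge0 // W_lip_ab //; apply/andP; lra.
  have := le_trans (ler_norm _) Wuv; lra.
have Wbv : `|W b - W v| <= (1 - delta) * (b - v).
  by rewrite -[b - v]ger0_norm ?subr_ge0 // W_lip_ab //; apply/andP; lra.
have Wub : `|W u - W b| <= u - b.
  by rewrite -[u - b]ger0_norm ?W_lip1 // subr_ge0 ltW.
have := le_trans (ler_norm _) Wbv; have := le_trans (ler_norm _) Wub; lra.
Qed.

Lemma zplus_solution_sub_le z0 eps z :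
  0 < delta -> 0 <= eps -> a <= z0 - eps ->
  2 * eps < delta * (b - (z0 - eps)) ->
  zplus_solution W z0 eps z -> z - z0 <= 2 * eps / delta.
Proof.
rewrite /zplus_solution => d_gt0 eps_ge0 av eps_small sol.
have vb : z0 - eps <= b.
  have : 0 < delta * (b - (z0 - eps)) by lra.
  by rewrite pmulr_rgt0 // subr_gt0 => /ltW.
rewrite ler_pdivlMr //; have [zz0|z0z] := lerP z z0.
  have : 0 <= (z0 - z) * delta by rewrite mulr_ge0 ?subr_ge0 // ltW.
  lra.
have := increment_le_of_lipschitz (u := z - eps) (v := z0 - eps).
rewrite sol => /(_ ltac:(lra) ltac:(lra)).
have [_|_] := lerP (z - eps) b; lra.
Qed.

End LipschitzIncrement.

Theorem lemma7p1 (R : realType) (Om : R -> R) (mu : probability R R)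
  (a a0 b0 b delta : R) :
  continual_diagram Om ->
  is_transition_measure Om mu ->
  a < a0 -> a0 < b0 -> b0 < b ->
  0 < delta ->
  (forall x y, a <= x <= b -> a <= y <= b ->
     `|Om x - Om y| <= (1 - delta) * `|x - y|) ->
  bounded_density_on mu a b ->
  exists eps0 : R, 0 < eps0 /\
    forall z0 eps : R, a0 <= z0 <= b0 -> 0 < eps < eps0 ->
      forall zmax : R, is_zplus_max Om z0 eps zmax ->
        zmax - z0 <= 2 * eps / delta.
Proof.
move=> [_ [Om_lip1 _]] _ aa0 a0b0 b0b d_gt0 Om_lip_ab _.
exists (Order.min (a0 - a) (delta * (b - b0) / 2)); split.
  by rewrite lt_min subr_gt0 aa0 divr_gt0 // mulr_gt0 // subr_gt0.
move=> z0 eps /andP[a0z0 z0b0] /andP[eps_gt0].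
rewrite lt_min => /andP[eps_lt ltr_eps] zmax [sol _].
have eps_small : 2 * eps < delta * (b - (z0 - eps)).
  have : delta * (b - b0) <= delta * (b - (z0 - eps)) by rewrite ler_pM2l //; lra.
  lra.
apply: (zplus_solution_sub_le Om_lip1 Om_lip_ab) sol => //; [exact: ltW | lra].
Qed.
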